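(* Let $T$ be a string of length $n$ over an integer alphabet of size $n^{O(1)}$ whose last character $T[n]=\$$ occurs nowhere else in $T$. Suppose the suffix array $\mathrm{SA}$ of $T$ is stored as a plain array in $n\lg n$ bits (allowing constant-time access) and the LCP array is stored in the $2n+o(n)$-bit representation (allowing constant-time access). Then the longest previous factor array $\mathrm{LPF}$ of $T$ can be computed in $O(n)$ time using $O(\lg n)$ additional bits of working space, not counting the space for $\mathrm{LPF}$ itself.
   Context: Computational model: word RAM with word size $\Omega(\lg n)$. $\mathrm{SA}[i]$ is the starting position of the lexicographically $i$-th suffix of $T$. $\mathrm{LCP}[1]:=0$ and for $2\le i\le n$, $\mathrm{LCP}[i]$ is the length of the longest common prefix of $T[\mathrm{SA}[i]..n]$ and $T[\mathrm{SA}[i-1]..n]$. The $2n+o(n)$-bit representation of LCP: let $\mathrm{PLCP}[\mathrm{SA}[i]]=\mathrm{LCP}[i]$, $I[1]:=\mathrm{PLCP}[1]$, $I[i]:=\mathrm{PLCP}[i]-\mathrm{PLCP}[i-1]+1$ for $2\le i\le n$; write $0^{I[i]}1$ consecutively into a bit vector $S$ of length at most $2n$ and add a constant-time select structure, so that $\mathrm{LCP}[i]=\mathrm{select}_1(S,\mathrm{SA}[i])-2\,\mathrm{SA}[i]$. For $1\le j\le n$, $\mathrm{LPF}[j]:=\max\{\ell \mid \exists\, i\in[1..j-1] \text{ with } T[i..i+\ell-1]=T[j..j+\ell-1]\}$ (with $\ell=0$ allowed). *)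

From mathcomp Require Import all_boot.
Set Implicit Arguments. Unset Strict Implicit. Unset Printing Implicit Defensive.

(* A string T of length n = size T over an integer alphabet is a seq nat;
   T[i] (1 <= i <= n) is nth 0 T i.-1. *)

Definition suf (T : seq nat) (i : nat) : seq nat := drop i.-1 T.

Fixpoint lex_lt (s t : seq nat) : bool :=
  match s, t with
  | [::], [::] => false
  | [::], _ :: _ => true
  | _ :: _, [::] => false
  | a :: s', b :: t' => (a < b) || ((a == b) && lex_lt s' t')
  end.

Fixpoint lcp_len (s t : seq nat) : nat :=
  match s, t with
  | a :: s', b :: t' => if a == b then (lcp_len s' t').+1 else 0
  | _, _ => 0
  end.

(* sa (as the list [SA[1]; ...; SA[n]]) is the suffix array of T:
   SA[i] is the starting position of the lexicographically i-th suffix. *)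
Definition is_suffix_array (T sa : seq nat) : bool :=
  perm_eq sa (iota 1 (size T)) && sorted lex_lt [seq suf T i | i <- sa].

Definition SAf (sa : seq nat) (i : nat) : nat := nth 0 sa i.-1.

Definition LCPa (T sa : seq nat) (i : nat) : nat :=
  if i <= 1 then 0 else lcp_len (suf T (SAf sa i)) (suf T (SAf sa i.-1)).

Definition PLCP (T sa : seq nat) (p : nat) : nat := LCPa T sa (index p sa).+1.

(* I[1] := PLCP[1], I[i] := PLCP[i] - PLCP[i-1] + 1 (always >= 0) *)
Definition Ivec (T sa : seq nat) (i : nat) : nat :=
  if i == 1 then PLCP T sa 1 else PLCP T sa i + 1 - PLCP T sa i.-1.

Definition Sbits (T sa : seq nat) : seq bool :=
  flatten [seq nseq (Ivec T sa i) false ++ [:: true] | i <- iota 1 (size T)].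

(* select_1(S, j): 1-based position of the j-th 1 in S; 0 if j = 0 or S has
   fewer than j ones. *)
Fixpoint select1 (s : seq bool) (j : nat) : nat :=
  match s with
  | [::] => 0
  | b :: s' =>
      if b && (j == 1) then 1
      else let p := select1 s' (if b then j.-1 else j) in
           if p == 0 then 0 else p.+1
  end.

Definition substr_eq (T : seq nat) (i j l : nat) : bool :=
  [&& i + l <= (size T).+1, j + l <= (size T).+1 &
      take l (drop i.-1 T) == take l (drop j.-1 T)].

Definition LPF (T : seq nat) (j : nat) : nat :=
  \max_(l < (size T).+1 | [exists i : 'I_j, (1 <= i) && substr_eq T i j l]) l.

(* A program is a finite list of instructions over registers indexed by nat
   (a program mentions only finitely many, i.e. O(1), registers).  It has
   constant-time read-only access to n, to the plain array SA[1..n], and to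
   the 2n+o(n)-bit LCP representation: the bits of S and select_1 on S.  It
   has constant-time read/write access to the output array LPF[1..n], which is
   not counted as working space.  Each instruction costs one time unit. *)
Inductive instr :=
| IConst  (r c : nat)
| IAdd    (r a b : nat)
| ISub    (r a b : nat)                (* r := a - b (truncated) *)
| IMul    (r a b : nat)
| IDiv    (r a b : nat)                (* r := a / b  (0 if b = 0) *)
| IMod    (r a b : nat)
| IJlt    (a b tgt : nat)
| IJmp    (tgt : nat)
| IReadN  (r : nat)
| IReadSA (r a : nat)                  (* r := SA[a] (0 if out of range) *)
| IReadS  (r a : nat)                  (* r := S[a]  (0 if out of range) *)
| ISelect (r a : nat)
| IReadOut  (r a : nat)
| IWriteOut (a b : nat)                (* LPF[a] := b  (no-op if a not in [1..n]) *)
| IHalt.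

Record input := Input { in_n : nat; in_sa : seq nat; in_S : seq bool }.

Record config := Config { pc : nat; regs : nat -> nat; out : nat -> nat }.

Definition upd (f : nat -> nat) (k v : nat) : nat -> nat :=
  fun x => if x == k then v else f x.

Definition halted (P : seq instr) (c : config) : bool :=
  if nth IHalt P (pc c) is IHalt then true else false.

Definition step (P : seq instr) (inp : input) (c : config) : config :=
  let R := regs c in
  let nxt := (pc c).+1 in
  let set r v := Config nxt (upd R r v) (out c) in
  match nth IHalt P (pc c) with
  | IConst r k => set r k
  | IAdd r a b => set r (R a + R b)
  | ISub r a b => set r (R a - R b)
  | IMul r a b => set r (R a * R b)
  | IDiv r a b => set r (R a %/ R b)
  | IMod r a b => set r (R a %% R b)
  | IJlt a b t => Config (if R a < R b then t else nxt) R (out c)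
  | IJmp t => Config t R (out c)
  | IReadN r => set r (in_n inp)
  | IReadSA r a => set r (nth 0 (0 :: in_sa inp) (R a))
  | IReadS r a => set r (nat_of_bool (nth false (false :: in_S inp) (R a)))
  | ISelect r a => set r (select1 (in_S inp) (R a))
  | IReadOut r a => set r (out c (R a))
  | IWriteOut a b =>
      Config nxt R (if (1 <= R a <= in_n inp) then upd (out c) (R a) (R b)
                    else out c)
  | IHalt => c
  end.

Fixpoint run (P : seq instr) (inp : input) (k : nat) (c : config) : config :=
  if k is k'.+1 then run P inp k' (step P inp c) else c.

Definition init_config : config := Config 0 (fun _ => 0) (fun _ => 0).

Definition input_of (T sa : seq nat) : input := Input (size T) sa (Sbits T sa).

(* Crochemore and Ilie: if b and a are the ranks of the previous and next
   smaller values of SA[c] in SA, then LPF[SA[c]] is the larger of the LCPs of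
   the suffixes of ranks b, c and of ranks c, a.  Scanning the ranks from left
   to right with a stack of ranks of increasing SA value, b is the rank below c
   on the stack and a the rank whose arrival pops c; the LCP with a is the
   running minimum of the LCPs of adjacent ranks, each read off the 2n-bit
   representation as select_1(S, SA[i]) - (2 SA[i] - 1).  The stack costs no
   working space: the output cell of each stacked position holds the position
   below it and their LCP packed into one word below (n+1)^2, and it is
   overwritten by the LPF value when popped.  Each rank is pushed and popped
   once, so the machine halts after O(n) steps; every word is below (n+1)^2 at
   the two loop heads, hence below (n+1)^512 in between. *)

From mathcomp Require Import all_boot zify.
Set Implicit Arguments. Unset Strict Implicit. Unset Printing Implicit Defensive.

Lemma lex_lt_irr s : lex_lt s s = false.
Proof. by elim: s => //= a s ->; rewrite ltnn eqxx. Qed.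

Lemma lex_lt_trans : transitive lex_lt.
Proof.
move=> t s u; elim: s t u => [|a s IH] [|b t] [|c u] //=.
case/orP=> [ba|/andP[/eqP-> ts]]; case/orP=> [ac|/andP[/eqP<- su]].
- by rewrite (ltn_trans ba ac).
- by rewrite ba.
- by rewrite ac.
- by rewrite eqxx (IH _ _ ts su) orbT.
Qed.

Lemma lex_lt_asym s t : lex_lt s t -> lex_lt t s = false.
Proof. by move=> st; apply/negP=> /(lex_lt_trans st); rewrite lex_lt_irr. Qed.

Lemma lcp_lenC s t : lcp_len s t = lcp_len t s.
Proof. by elim: s t => [|a s IH] [|b t] //=; rewrite eq_sym IH. Qed.

Lemma lcp_len_le_size s t : lcp_len s t <= size s.
Proof. by elim: s t => [|a s IH] [|b t] //=; case: eqP => // _; rewrite ltnS. Qed.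

Lemma lcp_len_min s t u : lex_lt s t -> lex_lt t u ->
  lcp_len s u = minn (lcp_len s t) (lcp_len t u).
Proof.
elim: s t u => [|a s IH] [|b t] [|c u] //=; first by rewrite min0n.
case/orP=> [ab|/andP[/eqP<- st]]; case/orP=> [bc|/andP[/eqP<- tu]].
- by rewrite (ltn_eqF ab) (ltn_eqF (ltn_trans ab bc)) min0n.
- by rewrite (ltn_eqF ab) min0n.
- by rewrite eqxx (ltn_eqF bc) minn0.
- by rewrite !eqxx (IH _ _ st tu) minnSS.
Qed.

Lemma take_eq_lcp_len s t l :
  [&& l <= size s, l <= size t & take l s == take l t] = (l <= lcp_len s t).
Proof.
elim: s t l => [|a s IH] [|b t] [|l] //=; rewrite ?andbF // eqseq_cons.
by case: eqVneq => _; rewrite /= ?andbF // !ltnS -IH.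
Qed.

Lemma select1_0 s : select1 s 0 = 0.
Proof. by elim: s => [|[] s IH] //=; rewrite IH. Qed.

Lemma select1_le_size s j : select1 s j <= size s.
Proof.
elim: s j => [|b s IH] j //=; case: ifP => // _.
by case: eqP => // _; rewrite ltnS IH.
Qed.

Lemma select1_nseq k s j : select1 (nseq k false ++ s) j =
  if select1 s j == 0 then 0 else select1 s j + k.
Proof.
elim: k => [|k IH] /=; first by case: eqP => [->|_]; rewrite ?addn0.
by rewrite IH; case: (select1 s j) => [|m] //=; rewrite addnS.
Qed.

Lemma select1_blocks ks j : 0 < j <= size ks ->
  select1 (flatten [seq nseq k false ++ [:: true] | k <- ks]) j =
  sumn [seq k.+1 | k <- take j ks].
Proof.
elim: ks j => [|k ks IH] [|[|j]] //= jn.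
  by rewrite -catA select1_nseq /= take0 /= addn0 add1n.
rewrite -catA select1_nseq /= IH //.
case: ks {IH} jn => [|k' ks] //= _; rewrite addSn; lia.
Qed.

Section SuffixArray.
Variables (T sa : seq nat).
Hypothesis sa_ok : is_suffix_array T sa.
Local Notation n := (size T).

(* [SA0 c] is SA[c] for 1 <= c <= n and the sentinel position 0 otherwise. *)
Definition SA0 c := nth 0 (0 :: sa) c.

Definition ISA q := (index q sa).+1.

Definition sufr x := if 0 < x <= n then suf T (SA0 x) else [::].

Definition lcpr x y := lcp_len (sufr x) (sufr y).

Lemma size_sa : size sa = n.
Proof. by case/andP: sa_ok => /perm_size ->; rewrite size_iota. Qed.

Lemma uniq_sa : uniq sa.
Proof. by case/andP: sa_ok => /perm_uniq ->; rewrite iota_uniq. Qed.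

Lemma mem_sa q : (q \in sa) = (0 < q <= n).
Proof. by case/andP: sa_ok => /perm_mem ->; rewrite mem_iota add1n ltnS. Qed.

Lemma SA0_le c : SA0 c <= n.
Proof.
case: c => // c; rewrite /SA0 /=; case: (ltnP c (size sa)) => [cn|cn].
  by move: (mem_nth 0 cn); rewrite mem_sa => /andP[].
by rewrite nth_default.
Qed.

Lemma SA0_default c : n < c -> SA0 c = 0.
Proof. by case: c => // c cn; rewrite /SA0 /= nth_default // size_sa. Qed.

Lemma SA0_range c : 0 < c <= n -> 0 < SA0 c <= n.
Proof. by case: c => // c cn; rewrite /SA0 /= -mem_sa mem_nth ?size_sa. Qed.

Lemma SA0_inj x y : 0 < x <= n -> 0 < y <= n -> SA0 x = SA0 y -> x = y.
Proof.
case: x => // x; case: y => // y xn yn /eqP; rewrite /SA0 /=.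
by rewrite (nth_uniq 0 _ _ uniq_sa) ?size_sa // => /eqP->.
Qed.

Lemma SA0_neq x y : x < y <= n -> SA0 x != SA0 y.
Proof.
move=> /andP[xy yn]; have yr : 0 < y <= n by rewrite yn (leq_ltn_trans _ xy).
case: x xy => [|x] xy; first by rewrite neq_ltn (proj1 (andP (SA0_range yr))).
apply/eqP => /SA0_inj eq_xy; suff : x.+1 = y by lia.
by apply: eq_xy; lia.
Qed.

Lemma SA0_ISA q : 0 < q <= n -> SA0 (ISA q) = q.
Proof. by rewrite -mem_sa => qin; rewrite /SA0 /= nth_index. Qed.

Lemma ISA_range q : 0 < q <= n -> 0 < ISA q <= n.
Proof. by rewrite -mem_sa -index_mem size_sa. Qed.

Lemma ISA_SA0 c : 0 < c <= n -> ISA (SA0 c) = c.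
Proof. by case: c => // c cn; rewrite /ISA /SA0 /= index_uniq ?uniq_sa ?size_sa. Qed.

Lemma suf_SA0_sorted x y : 0 < x -> x < y <= n ->
  lex_lt (suf T (SA0 x)) (suf T (SA0 y)).
Proof.
case: x => // x _ /andP[xy yn]; case: y xy yn => // y xy yn.
have /andP[_ sorted_sa] := sa_ok.
have := sorted_ltn_nth lex_lt_trans [::] sorted_sa x y.
rewrite !inE size_map size_sa !(nth_map 0) ?size_sa; first by apply; lia.
all: lia.
Qed.

Lemma sufrE x : 0 < x <= n -> sufr x = suf T (SA0 x).
Proof. by rewrite /sufr => ->. Qed.

Lemma lcprC x y : lcpr x y = lcpr y x.
Proof. exact: lcp_lenC. Qed.

Lemma lcpr_le x y : lcpr x y <= n.
Proof.
rewrite /lcpr /sufr; case: ifP => _; last by [].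
by rewrite (leq_trans (lcp_len_le_size _ _)) // size_drop leq_subr.
Qed.

Lemma lcpr0 y : lcpr 0 y = 0.
Proof. by []. Qed.

Lemma lcpr_out x : lcpr x n.+1 = 0.
Proof. by rewrite lcprC /lcpr /sufr ltnn andbF. Qed.

Lemma lcpr_min b c a : b < c -> c < a <= n.+1 ->
  lcpr b a = minn (lcpr b c) (lcpr c a).
Proof.
move=> bc /andP[ca an]; case: b bc => [|b] bc; first by rewrite !lcpr0 min0n.
case: (ltngtP a n.+1) an => // [an|->] _; last by rewrite !lcpr_out minn0.
rewrite /lcpr !sufrE; try lia.
by apply: lcp_len_min; apply: suf_SA0_sorted; lia.
Qed.

Lemma lcpr_mono_l x b c : 0 < x <= b -> b < c <= n -> lcpr x c <= lcpr b c.
Proof.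
move=> /andP[x0 xb] /andP[bc cn]; have [xb'|->] : x < b \/ x = b by lia.
  by rewrite (@lcpr_min x b c) ?geq_minr //; lia.
by [].
Qed.

Lemma lcpr_mono_r c a x : c < a -> a <= x <= n -> lcpr c x <= lcpr c a.
Proof.
move=> ca /andP[ax xn]; have [ax'|<-] : a < x \/ a = x by lia.
  by rewrite (@lcpr_min c a x) ?geq_minl //; lia.
by [].
Qed.


Lemma substr_eq_lcp i j l : 0 < i <= n -> 0 < j <= n ->
  substr_eq T i j l = (l <= lcp_len (suf T i) (suf T j)).
Proof.
case: i => // i /= ilt; case: j => // j /= jlt.
rewrite /substr_eq -take_eq_lcp_len /suf !size_drop /= !addSn !ltnS.
have fits k : k < n -> (k + l <= n) = (l <= n - k) by move=> ?; apply/idP/idP; lia.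
by rewrite !fits.
Qed.

Lemma lcp_le_LPF i j : 0 < i < j -> j <= n -> lcp_len (suf T i) (suf T j) <= LPF T j.
Proof.
move=> /andP[i0 ij] jn.
have ln : lcp_len (suf T i) (suf T j) < n.+1.
  by rewrite ltnS (leq_trans (lcp_len_le_size _ _)) // size_drop leq_subr.
apply: (leq_bigmax_cond (Ordinal ln)); apply/existsP; exists (Ordinal ij).
by rewrite /= i0 substr_eq_lcp //; lia.
Qed.

Lemma LPF_le j m : 0 < j <= n ->
  (forall i, 0 < i < j -> lcp_len (suf T i) (suf T j) <= m) -> LPF T j <= m.
Proof.
move=> jr ub; apply/bigmax_leqP => l /existsP[i /andP[i0 eq_il]].
have ij : 0 < i < j by rewrite i0 ltn_ord.
by apply: leq_trans (ub _ ij); rewrite -substr_eq_lcp //; lia.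
Qed.

Lemma lcpr_le_LPF x c : 0 < c <= n -> SA0 x < SA0 c -> lcpr x c <= LPF T (SA0 c).
Proof.
move=> cr xc; rewrite /lcpr (sufrE cr) /sufr; case: ifP => xr; last by [].
by apply: lcp_le_LPF; [have := SA0_range xr; lia | exact: SA0_le].
Qed.

(* Crochemore and Ilie: [b] and [a] are the previous and next smaller values
   of rank [c] in SA, so every position before [SA[c]] has rank at most [b] or
   at least [a]. *)
Lemma LPF_nearest_smaller b c a : 0 < c <= n -> b < c < a -> a <= n.+1 ->
  SA0 b < SA0 c -> (forall x, b < x < c -> SA0 c < SA0 x) ->
  SA0 a < SA0 c -> (forall x, c < x < a -> SA0 c < SA0 x) ->
  LPF T (SA0 c) = maxn (lcpr b c) (lcpr c a).
Proof.
move=> cr /andP[bc ca] an psv_b between_b nsv_a between_a.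
have ge_b := lcpr_le_LPF cr psv_b.
have ge_a : lcpr c a <= LPF T (SA0 c) by rewrite lcprC lcpr_le_LPF.
apply/eqP; rewrite eqn_leq geq_max ge_b ge_a !andbT.
apply: LPF_le; first exact: SA0_range.
move=> i ir; have irn : 0 < i <= n by have := SA0_le c; lia.
rewrite -(SA0_ISA irn) -sufrE ?ISA_range // -(sufrE cr) -/(lcpr _ _).
have := ISA_range irn; have := SA0_ISA irn; set x := ISA i => xi xr.
have [xc|cx|xc] := ltngtP x c; last by move: ir; rewrite -xi xc ltnn andbF.
- have xb : x <= b.
    by rewrite leqNgt; apply/negP => bx; have := between_b x; rewrite bx xc xi; lia.
  by rewrite leq_max lcpr_mono_l //; lia.
- have ax : a <= x.
    by rewrite leqNgt; apply/negP => xa; have := between_a x; rewrite xa cx xi; lia.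
  by rewrite leq_max lcprC lcpr_mono_r ?orbT //; lia.
Qed.

End SuffixArray.

Section LCPRepresentation.
Variables (T sa : seq nat).
Hypothesis sa_ok : is_suffix_array T sa.
Local Notation n := (size T).
Local Notation SA0 := (SA0 sa).
Local Notation ISA := (ISA sa).
Local Notation lcpr := (lcpr T sa).
Local Notation PLCP := (PLCP T sa).

Lemma PLCP_SA0 c : 0 < c <= n -> PLCP (SA0 c) = lcpr c.-1 c.
Proof.
move=> cr; rewrite /PLCP -/(ISA _) (ISA_SA0 sa_ok) // /LCPa /lcpr.
case: c cr => [|[|c]] //= cr; rewrite lcp_lenC !sufrE //; lia.
Qed.

Lemma lcp_le_PLCP i q : 0 < i <= n -> 0 < q <= n ->
  lex_lt (suf T i) (suf T q) -> lcp_len (suf T i) (suf T q) <= PLCP q.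
Proof.
move=> ir qr iq; have yr := ISA_range sa_ok ir; have zr := ISA_range sa_ok qr.
have yz : ISA i < ISA q.
  rewrite ltnNge; apply/negP => zy; move: iq.
  rewrite -(SA0_ISA sa_ok ir) -(SA0_ISA sa_ok qr).
  have [zy'|->] : ISA q < ISA i \/ ISA q = ISA i by lia.
    by rewrite lex_lt_asym // suf_SA0_sorted //; lia.
  by rewrite lex_lt_irr.
rewrite -(SA0_ISA sa_ok qr) PLCP_SA0 ?(SA0_ISA sa_ok) //.
rewrite -{1}(SA0_ISA sa_ok ir) -{1}(SA0_ISA sa_ok qr) -!sufrE //.
by apply: lcpr_mono_l => //; lia.
Qed.

Lemma suf_cons i : 0 < i <= n -> suf T i = nth 0 T i.-1 :: suf T i.+1.
Proof. by case: i => // i /= iT; rewrite /suf /= (drop_nth 0). Qed.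

(* Kasai et al.: dropping the common first character of two adjacent suffixes
   leaves a pair of suffixes in the same order. *)
Lemma PLCP_pred_le q : 1 < q <= n -> PLCP q.-1 <= (PLCP q).+1.
Proof.
move=> qr; have q1r : 0 < q.-1 <= n by lia.
have [x [xq xr]] : exists x, SA0 x = q.-1 /\ 0 < x <= n.
  by exists (ISA q.-1); rewrite (SA0_ISA sa_ok) // (ISA_range sa_ok).
rewrite -xq PLCP_SA0 //; case: x xq xr => [|[|x]] // xq xr.
set v := SA0 x.+1; have vr : 0 < v <= n by apply: (SA0_range sa_ok); lia.
have : lex_lt (suf T v) (suf T q.-1) by rewrite -xq; apply: suf_SA0_sorted => //; lia.
have -> : lcpr x.+1 x.+2 = lcp_len (suf T v) (suf T q.-1).
  by rewrite /lcpr !sufrE -?xq //; lia.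
rewrite (suf_cons vr) (suf_cons q1r) prednK /=; last by lia.
case: eqP => [->|_ _]; last by [].
rewrite ltnn /= ltnS => lt_tail.
have [vn|vn] := leqP v.+1 n; first by apply: lcp_le_PLCP => //; lia.
by rewrite /suf /= drop_oversize //; lia.
Qed.

(* The truncated subtraction in [Ivec] is exact by [PLCP_pred_le]. *)
Lemma sumn_Ivec p : 0 < p <= n ->
  sumn [seq (Ivec T sa i).+1 | i <- iota 1 p] = PLCP p + (2 * p - 1).
Proof.
elim: p => [|[|p] IH] // pr; first by rewrite /= /Ivec addn0 addn1.
rewrite -[p.+2]addn1 iotaD map_cat sumn_cat IH; last by lia.
have := PLCP_pred_le (q := p.+2); rewrite /= /Ivec /= add0n add1n !addn1; lia.
Qed.

Lemma select1_Sbits p : 0 < p <= n ->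
  select1 (Sbits T sa) p = PLCP p + (2 * p - 1).
Proof.
move=> pr; rewrite /Sbits (map_comp (fun k => nseq k false ++ [:: true]) (Ivec T sa)).
rewrite select1_blocks ?size_map ?size_iota // -map_take take_iota -map_comp.
by rewrite (minn_idPl (proj2 (andP pr))) sumn_Ivec.
Qed.

Lemma size_Sbits : size (Sbits T sa) <= 3 * n.
Proof.
case: (posnP n) => [n0|n0]; first by rewrite /Sbits n0.
have block_size i : size (nseq (Ivec T sa i) false ++ [:: true]) = (Ivec T sa i).+1.
  by rewrite size_cat size_nseq addn1.
rewrite size_flatten /shape -map_comp (eq_map block_size).
have nr : 0 < n <= n by rewrite n0 leqnn.
have := PLCP_SA0 (ISA_range sa_ok nr); rewrite (SA0_ISA sa_ok nr) sumn_Ivec // => ->.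
by have := @lcpr_le T sa (ISA n).-1 (ISA n); lia.
Qed.

Lemma lcpr_select1 c : 0 < c <= n.+1 ->
  select1 (Sbits T sa) (SA0 c) - (2 * SA0 c - 1) = lcpr c.-1 c.
Proof.
move=> cr; have [cn|->] : c <= n \/ c = n.+1 by lia.
  by rewrite select1_Sbits ?(SA0_range sa_ok) ?PLCP_SA0 //; lia.
by rewrite (SA0_default sa_ok) // select1_0 lcpr_out.
Qed.

End LCPRepresentation.

Lemma gtn_trans : transitive gtn.
Proof. exact: rev_trans ltn_trans. Qed.

Section StackInvariant.
Variables (T sa : seq nat).
Hypothesis sa_ok : is_suffix_array T sa.
Local Notation n := (size T).
Local Notation SA0 := (SA0 sa).
Local Notation lcpr := (lcpr T sa).

(* Ranks [0 < c < a] already scanned: those still on the stack [st] (top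
   first) have no smaller SA value yet; each stores in [O] the position and
   LCP of the rank below it, packed as [SA[b] * (n+1) + lcp]; the others
   already hold their LPF value. *)
Record stack_inv (a : nat) (st : seq nat) (O : nat -> nat) : Prop := StackInv {
  stack_rank : 0 < a <= n.+1;
  stack_sorted : sorted gtn st;
  stack_range : all (fun c => 0 < c < a) st;
  stack_open : forall c, c \in st -> forall x, c < x < a -> SA0 c < SA0 x;
  stack_psv : forall i, i < size st ->
    forall x, nth 0 st i.+1 < x < nth 0 st i -> SA0 (nth 0 st i) < SA0 x;
  stack_link : forall i, i < size st ->
    O (SA0 (nth 0 st i)) = SA0 (nth 0 st i.+1) * n.+1 + lcpr (nth 0 st i.+1) (nth 0 st i);
  stack_done : forall c, 0 < c < a -> c \notin st -> O (SA0 c) = LPF T (SA0 c) }.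

Definition lpf_final (O : nat -> nat) := forall j, 0 < j <= n -> O j = LPF T j.

Definition scan_inv a st O := stack_inv a st O /\ head 0 st = a.-1.

Definition pop_inv a st cur O :=
  [/\ stack_inv a st O, forall x, head 0 st < x < a -> SA0 a < SA0 x
    & cur = lcpr (head 0 st) a].

Lemma stack_mem a st O c : stack_inv a st O -> c \in st -> 0 < c < a.
Proof. by case=> _ _ /allP range _ _ _ _ /range. Qed.

Lemma stack_below a c st O : stack_inv a (c :: st) O ->
  head 0 st < c /\ SA0 (head 0 st) < SA0 c.
Proof.
move=> I; have /andP[c0 ca] := stack_mem I (mem_head c st).
have /andP[_ an] := stack_rank I.
case: st I => [|b st] I.
  have cr : 0 < c <= n by lia.
  by split => //; case/andP: (SA0_range sa_ok cr).
have /andP[bc _] := stack_sorted I; split => //.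
by apply: (stack_open I); rewrite ?inE ?eqxx ?orbT //; apply/andP.
Qed.

Lemma stack_head_lt a st O : stack_inv a st O -> head 0 st < a.
Proof.
case: st => [|c st] I; first by case/andP: (stack_rank I).
by case/andP: (stack_mem I (mem_head c st)).
Qed.

Lemma stack_head_max a st O c : stack_inv a st O -> c \in st -> c <= head 0 st.
Proof.
case: st => [|b st] I //; rewrite inE => /predU1P[->//|cst].
have := allP (order_path_min gtn_trans (stack_sorted I)) c cst; exact: ltnW.
Qed.

Lemma stack_inv_pop a c st O : stack_inv a (c :: st) O ->
  stack_inv a st (upd O (SA0 c) (LPF T (SA0 c))).
Proof.
move=> I; have [rk so /andP[_ range] op psv link done] := I.
have /andP[_ ca] := stack_mem I (mem_head c st).
have ne x : x \in st -> SA0 x != SA0 c.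
  move=> xst; have := allP (order_path_min gtn_trans so) x xst.
  by rewrite /= => xc; apply: SA0_neq; lia.
constructor => //.
- exact: path_sorted so.
- by move=> x xst; apply: op; rewrite inE xst orbT.
- by move=> i ist; apply: (psv i.+1).
- by move=> i ist; rewrite /upd (negbTE (ne _ (mem_nth 0 ist))); apply: (link i.+1).
move=> x xr xst; rewrite /upd; case: eqVneq => [->//|ne_xc].
by apply: done; rewrite // inE negb_or xst andbT; apply: contra ne_xc => /eqP->.
Qed.

Lemma stack_inv_push a st O : a <= n -> stack_inv a st O ->
  (forall x, head 0 st < x < a -> SA0 a < SA0 x) -> SA0 (head 0 st) < SA0 a ->
  stack_inv a.+1 (a :: st) (upd O (SA0 a) (SA0 (head 0 st) * n.+1 + lcpr (head 0 st) a)).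
Proof.
move=> an I between hd_lt; have [_ so range op psv link done] := I.
have ne x : x \in st -> SA0 x != SA0 a.
  by move=> /(stack_mem I) xr; apply: SA0_neq; lia.
constructor.
- lia.
- rewrite /= path_sortedE ?so ?andbT; last exact: gtn_trans.
  by apply/allP => x /(stack_mem I) /andP[].
- rewrite /= ltnSn andbT; have /andP[-> _] := stack_rank I.
  by apply/allP => x /(stack_mem I) /andP[-> xa]; rewrite ltnW.
- move=> c; rewrite inE => /predU1P[-> x|cst x] /andP[cx xa1]; first by lia.
  have [xa|->] : x < a \/ x = a by lia.
    by apply: op; rewrite ?cx.
  have := stack_head_max I cst; rewrite leq_eqVlt => /predU1P[->//|c_hd].
  have := op c cst (head 0 st); have := stack_head_lt I; lia.
- case=> [_|i /= ist] x /=; first by rewrite nth0; exact: between.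
  exact: psv.
- case=> [_|i /= ist] /=; first by rewrite /upd eqxx nth0.
  by rewrite /upd (negbTE (ne _ (mem_nth 0 ist))); apply: link.
move=> x xr; rewrite inE negb_or => /andP[xa xst]; rewrite /upd.
have xa' : x < a by rewrite ltn_neqAle xa; lia.
have -> : (SA0 x == SA0 a) = false by apply/negbTE/(SA0_neq sa_ok); rewrite xa'.
by apply: done; rewrite ?xa' ?(proj1 (andP xr)).
Qed.

Lemma stack_inv_final O : stack_inv n.+1 [::] O -> lpf_final O.
Proof.
move=> I j jr; rewrite -(SA0_ISA sa_ok jr); apply: (stack_done I) => //.
by have := ISA_range sa_ok jr; lia.
Qed.

Lemma scan_pop_inv a st O : scan_inv a st O -> pop_inv a st (lcpr a.-1 a) O.
Proof. by case=> I hd; split => //; rewrite hd // => x; lia. Qed.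

Lemma pop_inv_pop a c st cur O : pop_inv a (c :: st) cur O -> SA0 a < SA0 c ->
  let b := head 0 st in
  [/\ 0 < SA0 c <= n, O (SA0 c) = SA0 b * n.+1 + lcpr b c
    & pop_inv a st (minn cur (lcpr b c)) (upd O (SA0 c) (maxn (lcpr b c) cur))].
Proof.
move=> [I between ->] ac b; have [bc psv_b] := stack_below I.
have /andP[c0 ca] := stack_mem I (mem_head c st); have /andP[_ an] := stack_rank I.
have cr : 0 < c <= n by lia.
have between_b x : b < x < c -> SA0 c < SA0 x by exact: (stack_psv I (ltn0Sn _)).
have lpf_c : LPF T (SA0 c) = maxn (lcpr b c) (lcpr c a).
  apply: LPF_nearest_smaller => //; first by rewrite bc ca.
  by move=> x; apply: (stack_open I (mem_head c st)).
split; [exact: SA0_range | exact: (stack_link I (ltn0Sn _)) | split].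
- by rewrite -lpf_c; exact: stack_inv_pop I.
- move=> x /andP[bx xa]; have [xc|cx|->//] := ltngtP x c.
    by apply: ltn_trans ac (between_b _ _); rewrite bx xc.
  by apply: between; rewrite cx xa.
- by rewrite minnC -lcpr_min // ca an.
Qed.

Lemma pop_inv_push a st cur O : pop_inv a st cur O -> SA0 (head 0 st) <= SA0 a ->
  let O' := if 1 <= SA0 a <= n then upd O (SA0 a) (SA0 (head 0 st) * n.+1 + cur) else O in
  (a = n.+1 /\ st = [::] /\ lpf_final O') \/ (a <= n /\ scan_inv a.+1 (a :: st) O').
Proof.
move=> [I between ->] hd_le O'; have /andP[a0 an] := stack_rank I.
have hd_a := stack_head_lt I.
have [an'|ea] : a <= n \/ a = n.+1 by lia.
  have ar : 0 < a <= n by rewrite a0.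
  right; rewrite /O' (SA0_range sa_ok ar); split; last split => //.
  - exact: an'.
  - apply: stack_inv_push => //; rewrite ltn_neqAle hd_le andbT.
    by apply: (SA0_neq sa_ok); rewrite hd_a.
left; rewrite /O' ea (SA0_default sa_ok (ltnSn n)) /=.
have st0 : st = [::].
  case: st I hd_le hd_a {between O'} => [//|c st] I.
  have /andP[c0 ca] := stack_mem I (mem_head c st).
  have cr : 0 < c <= n by lia.
  have := SA0_range sa_ok cr.
  by rewrite ea (SA0_default sa_ok (ltnSn n)) => /andP[c_pos _] /(leq_trans c_pos).
split => //; split => //; apply: stack_inv_final; rewrite -ea -st0; exact: I.
Qed.

End StackInvariant.

Definition bounded (m : nat) (c : config) :=
  (forall r, regs c r < m) /\ (forall j, out c j < m).

Definition input_below (m : nat) (inp : input) :=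
  [/\ in_n inp < m, forall i, nth 0 (0 :: in_sa inp) i < m
    & forall j, select1 (in_S inp) j < m].

Definition consts_below (m : nat) (P : seq instr) :=
  forall pc r k, nth IHalt P pc = IConst r k -> k < m.

Lemma bounded_mono m m' c : bounded m c -> m <= m' -> bounded m' c.
Proof. by case=> bR bO mm; split=> x; apply: leq_trans mm; [exact: bR | exact: bO]. Qed.

Lemma step_bounded P inp m0 m c : 1 < m -> m0 <= m ->
  consts_below m0 P -> input_below m0 inp -> bounded m c ->
  bounded (m * m) (step P inp c).
Proof.
move=> m1 m0m cP [nm sam selm] [Rm Om].
have sq x : x < m -> x < m * m by move=> xm; rewrite (leq_trans xm) // leq_pmulr; lia.
have sq0 x : x < m0 -> x < m * m by move=> xm; apply: sq; exact: leq_trans xm m0m.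
have add x y : x < m -> y < m -> x + y < m * m by move=> *; nia.
have upd_sq f r v : (forall x, f x < m) -> v < m * m -> forall x, upd f r v x < m * m.
  by move=> fm vm x; rewrite /upd; case: eqP => _ //; exact: sq.
case: c Rm Om => k R O /= Rm Om; rewrite /step /=.
case ek: (nth IHalt P k) => [r c|r a b|r a b|r a b|r a b|r a b|a b t|t|r|r a|r a|r a|r a|a b|];
  split => x //=; try (by apply: sq); try apply: upd_sq => //.
- exact: sq0 (cP _ _ _ ek).
- exact: add.
- exact/sq/(leq_ltn_trans (leq_subr _ _)).
- exact: ltn_mul.
- exact/sq/(leq_ltn_trans (leq_div _ _)).
- exact/sq/(leq_ltn_trans (leq_mod _ _)).
- exact: sq0.
- exact: sq0.
- by apply: sq; case: (nth _ _ _); lia.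
- exact: sq0.
- exact: sq.
- by case: ifP => _; [apply: upd_sq => //; exact: sq | exact: sq].
Qed.

Lemma run_bounded P inp m0 m k c : 1 < m -> m0 <= m ->
  consts_below m0 P -> input_below m0 inp -> bounded m c ->
  bounded (m ^ 2 ^ k) (run P inp k c).
Proof.
elim: k m c => [|k IH] m c m1 m0m cP inpm cm /=; first by rewrite expn1.
rewrite expnS expnM -mulnn; apply: IH => //; last exact: step_bounded m1 m0m cP inpm cm.
- by rewrite -[1]muln1 ltn_mul.
- by rewrite (leq_trans m0m) // leq_pmulr; lia.
Qed.

Section Simulation.
Variables (P : seq instr) (inp : input) (G : Type).
Variables (inv : G -> config -> Prop) (pot : G -> nat) (good : config -> Prop).
Hypothesis inv_good : forall g c, inv g c -> good c.
Hypothesis inv_progress : forall g c, inv g c -> ~~ halted P c ->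
  exists k g', [/\ 0 < k, k + pot g' <= pot g, inv g' (run P inp k c)
                 & forall i, i < k -> good (run P inp i c)].

Lemma run_add k1 k2 c : run P inp (k1 + k2) c = run P inp k2 (run P inp k1 c).
Proof. by elim: k1 c => //= k IH c; rewrite IH. Qed.

Lemma inv_halts g c : inv g c ->
  exists t, [/\ t <= pot g, halted P (run P inp t c),
    (exists g', inv g' (run P inp t c)) & forall i, i <= t -> good (run P inp i c)].
Proof.
elim/ltn_ind: {g}(pot g) {-2}g (leqnn (pot g)) c => p IH g pg c Ic.
have [hlt|nhlt] := boolP (halted P c).
  exists 0; split => //; first by exists g.
  by move=> i; rewrite leqn0 => /eqP->; exact: inv_good Ic.
have [k [g' [k0 kpot Ic' early]]] := inv_progress Ic nhlt.
have [|t [tpot hlt' inv' late]] := IH (pot g') _ g' (leqnn _) _ Ic'; first by lia.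
exists (k + t); rewrite run_add; split => //; first by lia.
move=> i ik; have [/early //|ki] := ltnP i k.
by rewrite -(subnKC ki) run_add; apply: late; lia.
Qed.

End Simulation.

Lemma runS P inp k c : run P inp k.+1 c = run P inp k (step P inp c).
Proof. by []. Qed.

Lemma run0 P inp c : run P inp 0 c = c.
Proof. by []. Qed.

Local Arguments run : simpl never.

Section LPFProgram.
Variables (T sa : seq nat).
Hypothesis sa_ok : is_suffix_array T sa.
Hypothesis n_gt0 : 0 < size T.
Local Notation n := (size T).
Local Notation SA0 := (SA0 sa).
Local Notation lcpr := (lcpr T sa).
Local Notation inp := (input_of T sa).

Local Notation rank := 0 (only parsing).
Local Notation pos := 1 (only parsing).
Local Notation cur := 2 (only parsing).
Local Notation top := 3 (only parsing).
Local Notation tmp := 4 (only parsing).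
Local Notation below := 5 (only parsing).
Local Notation lcpb := 6 (only parsing).
Local Notation one := 7 (only parsing).
Local Notation base := 8 (only parsing).

(* Loop heads: pc 4 reads the next rank, pc 10 pops while SA[rank] < SA[top]. *)
Definition lpf_prog : seq instr :=
  [:: IReadN base; IConst one 1; IAdd base base one; IConst rank 1;
      IJlt base rank 27; IReadSA pos rank; ISelect cur pos;
      IAdd tmp pos pos; ISub tmp tmp one; ISub cur cur tmp;
      IJlt pos top 17; IMul tmp top base; IAdd tmp tmp cur;
      IWriteOut pos tmp; IMul top pos one; IAdd rank rank one; IJmp 4;
      IReadOut tmp top; IDiv below tmp base; IMod lcpb tmp base;
      IJlt lcpb cur 23; IWriteOut top lcpb; IJmp 25;
      IWriteOut top cur; IMul cur lcpb one;
      IMul top below one; IJmp 10; IHalt].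

Inductive phase := Scan of nat & seq nat | Pop of nat & seq nat | Stop.

Definition scan_state a st O :=
  (a = n.+2 /\ st = [::] /\ lpf_final T O) \/ scan_inv T sa a st O.

Definition prog_consts (R : nat -> nat) := R one = 1 /\ R base = n.+1.

Definition prog_inv (g : phase) (c : config) : Prop :=
  let R := regs c in
  bounded (n.+1 ^ 2) c /\
  match g with
  | Scan a st => [/\ pc c = 4, prog_consts R, R rank = a,
                   R top = SA0 (head 0 st) & scan_state a st (out c)]
  | Pop a st => [/\ pc c = 10, prog_consts R, R rank = a /\ R pos = SA0 a,
                  R top = SA0 (head 0 st) & pop_inv T sa a st (R cur) (out c)]
  | Stop => pc c = 27 /\ lpf_final T (out c)
  end.

Lemma below_sq x : x <= 3 * n -> x < n.+1 ^ 2.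
Proof. rewrite -mulnn; nia. Qed.

Lemma pack_below_sq p l : p <= n -> l <= n -> p * n.+1 + l < n.+1 ^ 2.
Proof. rewrite -mulnn; nia. Qed.

Lemma exec_exit a st c : prog_inv (Scan a st) c -> a = n.+2 ->
  prog_inv Stop (run lpf_prog inp 1 c).
Proof.
case: c => k R O [bd [/= -> [R1 Rb] Rr Rt st_ok]] ea.
rewrite runS /step /= Rb Rr ea ltnSn run0.
split=> //; case: st_ok => [[_ [_ fin]]//|[I _]].
by have := stack_rank I; lia.
Qed.

Lemma exec_scan a st c : prog_inv (Scan a st) c -> a <= n.+1 ->
  prog_inv (Pop a st) (run lpf_prog inp 6 c).
Proof.
case: c => k R O [[bdR bdO] [/= -> [R1 Rb] Rr Rt st_ok]] an.
have [I hd] : scan_inv T sa a st O by case: st_ok => // [[ea _]]; lia.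
have ar : 0 < a <= n.+1 by rewrite an (proj1 (andP (stack_rank I))).
rewrite runS /step /= Rb Rr ltnNge an /=.
do 5 rewrite runS /step /upd /=.
rewrite run0 Rr R1 -/(SA0 a).
have -> : SA0 a + SA0 a - 1 = 2 * SA0 a - 1 by lia.
rewrite lcpr_select1 //.
have := SA0_le sa_ok a; have := @lcpr_le T sa a.-1 a.
have := select1_le_size (Sbits T sa) (SA0 a); have := size_Sbits sa_ok => sel sel' lc sa_n.
split; first split=> [r|j] /=.
- by repeat case: ifP => _; try exact: bdR; apply: below_sq; lia.
- exact: bdO.
by split => //=; exact: scan_pop_inv.
Qed.

Lemma exec_pop a st c : prog_inv (Pop a st) c -> SA0 a < SA0 (head 0 st) ->
  prog_inv (Pop a (behead st)) (run lpf_prog inp 9 c).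
Proof.
case: c => k R O [[bdR bdO] [/= -> [R1 Rb] [Rr Rp] Rt P]] lt.
case: st Rt P lt => [|c st] /= Rt P lt; first by rewrite ltn0 in lt.
have [cr Oc P'] := pop_inv_pop sa_ok P lt; set b := head 0 st in Oc P'.
have bn := SA0_le sa_ok b; have lbn := @lcpr_le T sa b c.
have cur_n : R cur <= n by case: P => _ _ ->; exact: lcpr_le.
have div_b : O (SA0 c) %/ n.+1 = SA0 b by rewrite Oc divnMDl // divn_small ?addn0 // ltnS.
have mod_l : O (SA0 c) %% n.+1 = lcpr b c by rewrite Oc modnMDl modn_small // ltnS.
rewrite runS /step /= Rp Rt lt.
do 3 rewrite runS /step /upd /=.
rewrite Rt Rb div_b mod_l; rewrite runS /step /=.
have [le_cur|lt_cur] := leqP (R cur) (lcpr b c).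
- do 4 rewrite runS /step /upd /=.
  rewrite run0 Rt cr R1 !muln1 (minn_idPl le_cur) (maxn_idPl le_cur) in P' *.
  split; last by split => //=.
  by split=> [r|j] /=; repeat case: ifP => _; try exact: bdR; try exact: bdO; apply: below_sq; lia.
- do 4 rewrite runS /step /upd /=.
  rewrite run0 Rt cr R1 !muln1 (minn_idPr (ltnW lt_cur)) (maxn_idPr (ltnW lt_cur)) in P' *.
  split; last by split => //=.
  by split=> [r|j] /=; repeat case: ifP => _; try exact: bdR; try exact: bdO; apply: below_sq; lia.
Qed.

Lemma exec_push a st c : prog_inv (Pop a st) c -> SA0 (head 0 st) <= SA0 a ->
  prog_inv (if a <= n then Scan a.+1 (a :: st) else Scan n.+2 [::]) (run lpf_prog inp 7 c).
Proof.
case: c => k R O [[bdR bdO] [/= -> [R1 Rb] [Rr Rp] Rt P]] le.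
have cur_n : R cur <= n by case: P => _ _ ->; exact: lcpr_le.
have hd_n := SA0_le sa_ok (head 0 st); have a_n := SA0_le sa_ok a.
rewrite runS /step /= Rp Rt ltnNge le /=.
do 6 rewrite runS /step /upd /=.
rewrite run0 Rb Rp Rt Rr R1 muln1 addn1.
have an1 : a <= n.+1 by case: P => I _ _; case/andP: (stack_rank I).
have packed := pack_below_sq hd_n cur_n.
split.
  split=> [r|j] /=; repeat case: ifP => _;
    try exact: bdR; try exact: bdO; try exact: packed; by rewrite -mulnn; nia.
have [an|na] := leqP a n.
- case: (pop_inv_push sa_ok P le) => [[ea _]|[_ S]]; first by lia.
  have ar : 0 < a <= n by rewrite an andbT; case: P => I _ _; case/andP: (stack_rank I).
  by split => //=; right; move: S; rewrite (SA0_range sa_ok ar).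
have ea : a = n.+1 by lia.
case: (pop_inv_push sa_ok P le) => [[_ [st0 fin]]|[an _]]; last by lia.
move: fin; rewrite ea st0 (SA0_default sa_ok (ltnSn n)) /= => fin.
by split => //=; left.
Qed.

Lemma exec_init : prog_inv (Scan 1 [::]) (run lpf_prog inp 4 init_config).
Proof.
do 4 rewrite runS /step /upd /=; rewrite run0 addn1.
split; first by split=> [r|j] /=; repeat case: ifP => _; apply: below_sq; lia.
split => //; right; split => //; constructor => //= c; lia.
Qed.

(* A rank costs 6 + 7 steps to scan and push and 9 more when it is popped. *)
Definition pot (g : phase) : nat :=
  match g with
  | Scan a st => 22 * (n.+2 - a) + 9 * size st + 1
  | Pop a st => 22 * (n.+1 - a) + 9 * size st + 17
  | Stop => 0
  end.

Lemma lpf_prog_consts : consts_below 2 lpf_prog.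
Proof.
move=> pc r k; have small : all (fun i => if i is IConst _ k then k < 2 else true) lpf_prog by [].
case: (ltnP pc (size lpf_prog)) => [lt|ge] e; last by rewrite nth_default in e.
by move/all_nthP: small => /(_ IHalt pc lt); rewrite e.
Qed.

Lemma input_of_below : input_below (n.+1 ^ 2) inp.
Proof.
split => [|i|j] /=; apply: below_sq; first by lia.
  by have := SA0_le sa_ok i; rewrite /SA0; lia.
by have := size_Sbits sa_ok; have := select1_le_size (Sbits T sa) j; lia.
Qed.

(* Each block between loop heads executes at most 9 instructions, each of which
   at most squares the word bound. *)
Lemma run_short_bounded i c : bounded (n.+1 ^ 2) c -> i <= 8 ->
  bounded (n.+1 ^ 512) (run lpf_prog inp i c).
Proof.
move=> bc i8; have N1 : 1 < n.+1 ^ 2 by rewrite -mulnn; nia.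
apply: bounded_mono (run_bounded i N1 (leqnn _) _ input_of_below bc) _.
  by move=> ? ? ? /lpf_prog_consts k2; apply: leq_trans k2 _; rewrite -mulnn; nia.
rewrite -expnM leq_pexp2l // mulnC (@leq_trans (2 ^ 8 * 2)) // leq_mul2r /=.
by rewrite leq_pexp2l.
Qed.

Lemma prog_progress g c : prog_inv g c -> ~~ halted lpf_prog c ->
  exists k g', [/\ 0 < k, k + pot g' <= pot g, prog_inv g' (run lpf_prog inp k c)
    & forall i, i < k -> bounded (n.+1 ^ 512) (run lpf_prog inp i c)].
Proof.
move=> I nh.
have short k : k <= 9 -> forall i, i < k -> bounded (n.+1 ^ 512) (run lpf_prog inp i c).
  by move=> k9 i ik; apply: run_short_bounded; [exact: I.1 | lia].
case: g I nh => [a st|a st|] I nh.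
- have [an|na] := leqP a n.+1.
    exists 6, (Pop a st); split; [by [] | rewrite /pot; lia | exact: exec_scan | by apply: short].
  have ea : a = n.+2.
    case: I => _ [_ _ _ _ [[]//|[I _]]]; have := stack_rank I; lia.
  exists 1, Stop; split; [by [] | rewrite /pot; lia | exact: exec_exit I ea | by apply: short].
- have [lt|le] := ltnP (SA0 a) (SA0 (head 0 st)).
    have st_ne : 0 < size st by case: st I lt => //= _; rewrite ltn0.
    exists 9, (Pop a (behead st)); split; [by [] | | exact: exec_pop | by apply: short].
    by rewrite /pot size_behead; lia.
  have an : a <= n.+1 by case: I => _ [_ _ _ _ [J _ _]]; case/andP: (stack_rank J).
  exists 7, (if a <= n then Scan a.+1 (a :: st) else Scan n.+2 [::]); split.
  + by [].
  + by rewrite /pot; case: (leqP a n) => /= ?; lia.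
  + exact: exec_push.
  + by apply: short.
- by case: I nh => _ [pc27 _]; rewrite /halted pc27.
Qed.

Lemma prog_inv_bounded g c : prog_inv g c -> bounded (n.+1 ^ 512) c.
Proof. by case=> bc _; apply: bounded_mono bc _; rewrite leq_pexp2l. Qed.

Lemma prog_inv_halted g c : prog_inv g c -> halted lpf_prog c -> lpf_final T (out c).
Proof. by case: g => [a st|a st|] [_ I]; case: I => // pc_c; rewrite /halted pc_c. Qed.

End LPFProgram.

Theorem corollary3 :
  forall d : nat, exists (P : seq instr) (c : nat),
  forall T sa : seq nat,
    0 < size T ->
    all (fun x => x < size T ^ d) T ->
    count_mem (last 0 T) T = 1 ->
    is_suffix_array T sa ->
    exists t : nat,
      [/\ t <= c * size T,
          halted P (run P (input_of T sa) t init_config),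
          (forall j, 1 <= j <= size T ->
             out (run P (input_of T sa) t init_config) j = LPF T j) &
          (forall k, k <= t ->
             (forall r, regs (run P (input_of T sa) k init_config) r < (size T).+1 ^ c) /\
             (forall j, out (run P (input_of T sa) k init_config) j < (size T).+1 ^ c))].
Proof.
move=> d; exists lpf_prog, 512 => T sa n_gt0 _ _ sa_ok.
have init := exec_init sa_ok n_gt0.
have [t [t_pot hlt [g inv_t] bounded_t]] :=
  inv_halts (@prog_inv_bounded T sa) (prog_progress sa_ok n_gt0) init.
exists (4 + t); rewrite run_add; split => //.
- by move: t_pot; rewrite /pot /=; lia.
- exact: prog_inv_halted inv_t hlt.
move=> k kt; have [k4|k4] := ltnP k 4.
  apply: (run_short_bounded sa_ok n_gt0); last by lia.
  by split=> ? /=; rewrite -mulnn; nia.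
by rewrite -(subnKC k4) run_add; apply: bounded_t; lia.
Qed.
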